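(* Let $m\ge 2$. If $s=2m-1$ then $|T_s|=m^2-m$ and $\sum_{h\in T_s}h=\frac23m^4-m^3-\frac16m^2+\frac12m$; if $s=2m$ then $|T_s|=m^2$ and $\sum_{h\in T_s}h=\frac23m^4+\frac13m^3-\frac16m^2+\frac16m$. Moreover, for $s=2m-1$ the partition $\kappa_s$ with $\beta(\kappa_s)=T_s$ has length $m^2-m$ and largest part $m^2-2m+1$.
   Context: $T_s$ is the set of positive integers not expressible as $k_1s+k_2(s+1)+k_3(s+2)$ with $k_1,k_2,k_3$ nonnegative integers. The $\beta$-set of a partition is the set of hook lengths of its first-column boxes; the partition with $\beta$-set $\{h_1>\cdots>h_m\}$ is $(h_1-(m-1),h_2-(m-2),\ldots,h_m)$. *)

From HB Require Import structures.
From mathcomp Require Import all_boot all_order all_algebra.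
Set Implicit Arguments. Unset Strict Implicit. Unset Printing Implicit Defensive.

Definition expressible (s n : nat) : Prop :=
  exists k1 k2 k3 : nat, n = k1 * s + k2 * s.+1 + k3 * s.+2.

Definition inT (s n : nat) : Prop := 0 < n /\ ~ expressible s n.

(* the partition whose beta-set is the (finite) set listed by l:
   with {h_1 > ... > h_k} its parts are h_i - (k - i), i = 1..k *)
Definition beta_partition (l : seq nat) : seq nat :=
  let h := sort geq l in
  [seq nth 0 h i - (size h - 1 - i) | i <- iota 0 (size h)].

Definition plength (p : seq nat) : nat := count (fun x => 0 < x) p.
Definition largest_part (p : seq nat) : nat := foldr maxn 0 p.

From mathcomp Require Import all_boot all_order all_algebra.
From mathcomp Require Import zify ring.
Import GRing.Theory.

Set Implicit Arguments.
Unset Strict Implicit.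
Unset Printing Implicit Defensive.

(* A sum of k generators from {s, s+1, s+2} can be any number in [k s, k (s+2)],
   so T_s is the union of the open intervals (k (s+2), (k+1) s); the k-th one
   holds s - 1 - 2k integers and is empty as soon as 2k + 2 > s.  Summing these
   arithmetic progressions gives |T_s| and the sum of T_s.  For a beta-set of
   distinct positive numbers h_1 > ... > h_k, every part h_i - (k - i) is
   positive and the largest one is h_1 - (k - 1); for s = 2m - 1 the largest
   element of T_s is (m - 1)(2m - 1) - 1. *)

Lemma expressible_window s n : expressible s n <-> exists k, k * s <= n <= k * s.+2.
Proof.
split.
- move=> [k1 [k2 [k3 ->]]]; exists (k1 + k2 + k3); apply/andP.
  rewrite -[s.+2]addn2 -[s.+1]addn1 !mulnDr !mulnDl; lia.
- move=> [k /andP[lo hi]].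
  have [a [b [hab hb2 hn]]] : exists a b, [/\ a + b <= k, b < 2 & n = k * s + (2 * a + b)].
    exists ((n - k * s) %/ 2), ((n - k * s) %% 2).
    have := divn_eq (n - k * s) 2; have := ltn_pmod (n - k * s) (isT : 0 < 2).
    move: lo hi; rewrite -addn2 mulnDr; set p := k * s; set q := (n - p) %/ 2.
    set r := (n - p) %% 2; split; lia.
  exists (k - a - b), b, a; rewrite hn -[s.+2]addn2 -[s.+1]addn1.
  have -> : k = (k - a - b) + b + a by lia.
  nia.
Qed.

Lemma inT_gap s n : 0 < s ->
  inT s n <-> exists k, k * s.+2 < n < k.+1 * s.
Proof.
move=> s_gt0; split.
- move=> [n_gt0 n_nexpr]; exists (n %/ s).
  have := divn_eq n s; have := ltn_pmod n s_gt0; rewrite mulSn.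
  set q := n %/ s; set r := n %% s => r_lt_s n_eq; apply/andP; split; last lia.
  rewrite ltnNge; apply/negP => n_le; apply: n_nexpr; apply/expressible_window.
  by exists q; rewrite n_le andbT n_eq leq_addr.
- move=> [k /andP[lo hi]]; split; first lia.
  move/expressible_window=> [j /andP[lo' hi']].
  case: (leqP j k) => [j_le_k | k_lt_j].
  + have : j * s.+2 <= k * s.+2 by rewrite leq_mul2r j_le_k orbT.
    lia.
  + have : k.+1 * s <= j * s by rewrite leq_mul2r k_lt_j orbT.
    lia.
Qed.

Definition gap s k := iota (k * s.+2).+1 (s - 1 - 2 * k).

Definition gaps s K := flatten [seq gap s k | k <- iota 0 K].

Lemma mem_gap s k n : (n \in gap s k) = (k * s.+2 < n < k.+1 * s).
Proof.
rewrite mem_iota mulSn -[s.+2]addn2 mulnDr.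
by apply/andP/andP => -[lo hi]; split; lia.
Qed.

Lemma gapsS s K : gaps s K.+1 = gaps s K ++ gap s K.
Proof. by rewrite /gaps -addn1 iotaD map_cat flatten_cat /= cats0. Qed.

Lemma mem_gapsP s K n :
  reflect (exists2 k, k < K & k * s.+2 < n < k.+1 * s) (n \in gaps s K).
Proof.
apply: (iffP flatten_mapP) => -[k].
  by rewrite mem_iota mem_gap => k_lt_K n_in; exists k.
by move=> k_lt_K n_in; exists k; rewrite ?mem_gap ?mem_iota.
Qed.

Lemma mem_gaps_inT s K n : 0 < s -> s <= K.*2.+1 -> (n \in gaps s K) <-> inT s n.
Proof.
move=> s_gt0 s_le; rewrite inT_gap //; split => [/mem_gapsP[k _ n_in] | [k n_in]].
  by exists k.
apply/mem_gapsP; exists k => //; move: n_in s_le.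
rewrite mulSn -[s.+2]addn2 mulnDr -muln2; lia.
Qed.

Lemma uniq_gaps s K : uniq (gaps s K).
Proof.
elim: K => [|K IHK] //; rewrite gapsS cat_uniq IHK iota_uniq andbT /=.
apply/hasPn => n; rewrite mem_gap => /andP[lo _]; apply/mem_gapsP => -[k k_lt_K].
have : k.+1 * s <= K * s by rewrite leq_mul2r k_lt_K orbT.
move: lo; rewrite -[s.+2]addn2 mulnDr; lia.
Qed.

Lemma notin0_gaps s K : 0 \notin gaps s K.
Proof. by apply/mem_gapsP => -[k _ /andP[]]. Qed.

Lemma size_gaps s K : K.*2 <= s.+1 -> size (gaps s K) = K * (s - K).
Proof.
elim: K => [|K IHK] K_le //; rewrite gapsS size_cat size_iota IHK; nia.
Qed.

Lemma sumn_iota a b : 2 * sumn (iota a b) = b * (2 * a + b.-1).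
Proof. by elim: b a => [|b IHb] a //=; rewrite mulnDr IHb; case: b {IHb} => //=; nia. Qed.

Lemma sumn_gap s k : 2 * sumn (gap s k) = (s - 1 - 2 * k) * (2 * k * s.+1 + s).
Proof. rewrite sumn_iota; nia. Qed.

Section GapsSum.
Local Open Scope ring_scope.

Lemma sum_gaps s K : (K.*2 <= s.+1)%N ->
  (sumn (gaps s K))%:R = K%:R / 6 * (1 - 2 * s%:R + 3 * K%:R * (s%:R + 1)
     - 4 * K%:R ^+ 2 * (s%:R + 1) + 3 * s%:R ^+ 2 * K%:R) :> rat.
Proof.
elim: K => [|K IHK] K_le; first by rewrite /gaps /= !mul0r.
have gap_size : (s - 1 - 2 * K)%:R = s%:R - 1 - 2 * K%:R :> rat.
  by rewrite !natrB ?natrM //; lia.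
have := congr1 (fun x => x%:R : rat) (sumn_gap s K).
rewrite /= !natrM natrD gap_size => gap_sum.
rewrite gapsS sumn_cat natrD IHK; last by lia.
have -> : (sumn (gap s K))%:R = (2 * (sumn (gap s K))%:R) / 2 :> rat by field.
by rewrite gap_sum -!natr1; field.
Qed.

End GapsSum.

Lemma largest_partE l : largest_part l = \max_(x <- l) x.
Proof. by elim: l => [|x l IHl]; rewrite ?big_nil ?big_cons //= IHl. Qed.

Lemma largest_part_gaps s K : 0 < K -> K.*2 <= s -> largest_part (gaps s K) = K * s - 1.
Proof.
move=> K_gt0 K_le; rewrite largest_partE; apply/eqP; rewrite eqn_leq; apply/andP; split.
  apply/bigmax_leqP_seq => n /mem_gapsP[k k_lt_K /andP[_ n_lt]] _.
  have : k.+1 * s <= K * s by rewrite leq_mul2r k_lt_K orbT.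
  lia.
case: K K_gt0 K_le => // K _ K_le.
apply: (leq_bigmax_seq (F := id)) => //; apply/mem_gapsP; exists K => //.
rewrite -[s.+2]addn2 mulnDr mulSn; apply/andP; split; lia.
Qed.

Fixpoint beta_parts (h : seq nat) : seq nat :=
  if h is x :: t then (x - size t) :: beta_parts t else [::].

Lemma beta_partitionE l : beta_partition l = beta_parts (sort geq l).
Proof.
rewrite /beta_partition; elim: (sort geq l) => [|x t IHt] //=.
rewrite subn1 /= subn0; congr (_ :: _).
rewrite -IHt -(addn0 1) iotaDl -map_comp; apply: eq_map => i /=.
by rewrite add0n subnDA.
Qed.

Lemma size_lt_head x t : sorted gtn (x :: t) -> 0 \notin x :: t -> size t < x.
Proof.
elim: t x => [|y t IHt] x /=; first by move=> _; rewrite mem_seq1 lt0n eq_sym.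
rewrite !inE negb_or => /andP[y_lt_x y_sorted] /andP[x_neq0 y_notin].
by have := IHt y y_sorted y_notin; rewrite /= in y_lt_x; lia.
Qed.

Lemma plength_beta_parts h : sorted gtn h -> 0 \notin h -> plength (beta_parts h) = size h.
Proof.
elim: h => [|x t IHt] //= h_sorted h_notin.
rewrite /plength /= -/(plength _) IHt ?subn_gt0 ?size_lt_head //.
- exact: path_sorted h_sorted.
- by move: h_notin; rewrite inE negb_or => /andP[].
Qed.

Lemma largest_part_sorted x t : sorted geq (x :: t) -> largest_part (x :: t) = x.
Proof.
elim: t x => [|y t IHt] x; first by rewrite /largest_part /= maxn0.
case/andP => y_le_x y_sorted; change (maxn x (largest_part (y :: t)) = x).
by rewrite IHt //; apply/maxn_idPl.
Qed.

Lemma largest_part_beta_parts x t : sorted gtn (x :: t) -> 0 \notin x :: t ->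
  largest_part (beta_parts (x :: t)) = x - size t.
Proof.
elim: t x => [|y t IHt] x; first by rewrite /= maxn0.
move=> h_sorted h_notin; have /= /andP[y_lt_x y_sorted] := h_sorted.
have y_notin : 0 \notin y :: t by move: h_notin; rewrite inE negb_or => /andP[].
change (maxn (x - size (y :: t)) (largest_part (beta_parts (y :: t))) = x - size (y :: t)).
by rewrite IHt //=; have := size_lt_head y_sorted y_notin; lia.
Qed.

Lemma sorted_gtn_sort_geq l : uniq l -> sorted gtn (sort geq l).
Proof.
move=> l_uniq; rewrite gtn_sorted_uniq_geq sort_uniq l_uniq.
by apply: sort_sorted => a b; apply: leq_total.
Qed.

Lemma plength_beta_partition l : uniq l -> 0 \notin l ->
  plength (beta_partition l) = size l.
Proof.
move=> l_uniq l_notin; rewrite beta_partitionE plength_beta_parts ?size_sort //.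
  exact: sorted_gtn_sort_geq.
by rewrite mem_sort.
Qed.

Lemma largest_part_beta_partition l : uniq l -> 0 \notin l ->
  largest_part (beta_partition l) = largest_part l - (size l).-1.
Proof.
move=> l_uniq l_notin; rewrite beta_partitionE.
have l_sorted := sorted_gtn_sort_geq l_uniq.
have lE : largest_part l = largest_part (sort geq l).
  by rewrite !largest_partE (perm_big _ (permEl (perm_sort _ _))).
rewrite lE -(size_sort geq l); case: (sort geq l) l_sorted (mem_sort geq l) => [|x t] //.
move=> xt_sorted xt_mem; rewrite largest_part_beta_parts ?largest_part_sorted ?xt_mem //.
by apply: sub_sorted xt_sorted => a b /ltnW.
Qed.

Local Open Scope ring_scope.

Theorem mainTheorem9 (m : nat) (hm : (2 <= m)%N) :
  (exists l : seq nat,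
     [/\ uniq l /\ (forall n : nat, n \in l <-> inT (2 * m - 1) n),
         size l = (m ^ 2 - m)%N,
         ((sumn l)%:R : rat) =
           2/3 * m%:R ^+ 4 - m%:R ^+ 3 - 1/6 * m%:R ^+ 2 + 1/2 * m%:R,
         plength (beta_partition l) = (m ^ 2 - m)%N
       & largest_part (beta_partition l) = (m ^ 2 - 2 * m + 1)%N])
  /\
  (exists l : seq nat,
     [/\ uniq l, (forall n : nat, n \in l <-> inT (2 * m) n),
         size l = (m ^ 2)%N
       & ((sumn l)%:R : rat) =
           2/3 * m%:R ^+ 4 + 1/3 * m%:R ^+ 3 - 1/6 * m%:R ^+ 2 + 1/6 * m%:R]).
Proof.
split.
- (* The (m-1)-th interval is empty for s = 2m - 1, so the last nonempty one is
     the (m-2)-th, as [largest_part_gaps] requires. *)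
  exists (gaps (2 * m - 1)%N m.-1).
  have size_l : size (gaps (2 * m - 1)%N m.-1) = (m ^ 2 - m)%N.
    by rewrite size_gaps; nia.
  rewrite plength_beta_partition ?largest_part_beta_partition ?uniq_gaps ?notin0_gaps //.
  rewrite largest_part_gaps ?size_l ?sum_gaps; try lia.
  split=> //.
  + by split=> // n; apply: mem_gaps_inT; lia.
  + by rewrite -subn1 !natrB ?natrM; [field | lia..].
  + nia.
- exists (gaps (2 * m)%N m); split.
  + exact: uniq_gaps.
  + by move=> n; apply: mem_gaps_inT; lia.
  + by rewrite size_gaps; nia.
  + by rewrite sum_gaps ?natrM; [field | lia].
Qed.
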